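(* For integers $m\ge2$, $k\ge1$ let $V_J(m,k)=\left(1-\frac1m\right)\frac{k}{\ln m}$ and $V_H(m,k)=\frac{k(m^{1/k}-1)}{\ln m}$. Then $\min_{m\in\mathbb{Z}_{\ge2},\,k\in\mathbb{Z}_{\ge1}}\max\{V_J(m,k),V_H(m,k)\}=\frac{2(\sqrt3-1)}{\ln 3}$, attained at $m=3$, $k=2$. *)

From Stdlib Require Import Reals.
Open Scope R_scope.

Definition V_J (m k : nat) : R := (1 - / INR m) * INR k / ln (INR m).

Definition V_H (m k : nat) : R := INR k * (Rpower (INR m) (/ INR k) - 1) / ln (INR m).

Definition V_max (m k : nat) : R := Rmax (V_J m k) (V_H m k).

From Stdlib Require Import Reals Lra Lia Psatz.
From Coquelicot Require Import Coquelicot.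
Open Scope R_scope.

(* Let c = 2 (sqrt 3 - 1) / ln 3 = V_H 3 2 ~ 1.3326; one checks V_J 3 2 <= c.
   Every other pair has max (V_J, V_H) >= 1.36 > c.  Writing x = ln m / k, we have
   V_H m k = (e^x - 1) / x >= 1 + x/2 + x^2/6 >= 1.36 as soon as x >= 0.6, while for
   x < 0.6 the bound V_J m k = (1 - 1/m) / x > (1 - 1/m) / 0.6 wins for m >= 6; the
   remaining pairs with m <= 5 are settled by numerical bounds on ln 2, ..., ln 5, all
   obtained from third-order Taylor bounds on exp. *)

Lemma nonneg_of_deriv_nonneg (g g' : R -> R) :
  (forall c, derivable_pt_lim g c (g' c)) -> g 0 = 0 ->
  (forall c, 0 <= c -> 0 <= g' c) -> forall x, 0 <= x -> 0 <= g x.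
Proof.
  intros Hd Hg0 Hpos x Hx.
  destruct (Req_dec x 0) as [->|Hx0]; [lra|].
  destruct (MVT_cor2 g g' 0 x) as [c [Hdiff Hc]]; [lra|intros; apply Hd|].
  assert (0 <= g' c) by (apply Hpos; lra).
  nra.
Qed.

Lemma exp_ge_taylor2 x : 0 <= x -> 1 + x + x^2/2 <= exp x.
Proof.
  intros Hx.
  enough (0 <= exp x - (1 + x + x^2/2)) by lra.
  apply (nonneg_of_deriv_nonneg (fun c => exp c - (1 + c + c^2/2)) (fun c => exp c - (1 + c)));
    [| |intros c _|exact Hx].
  - intro c; apply is_derive_Reals; auto_derive; [easy|field].
  - rewrite exp_0; lra.
  - pose proof (exp_ineq1_le c); lra.
Qed.

Lemma exp_ge_taylor3 x : 0 <= x -> 1 + x + x^2/2 + x^3/6 <= exp x.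
Proof.
  intros Hx.
  enough (0 <= exp x - (1 + x + x^2/2 + x^3/6)) by lra.
  apply (nonneg_of_deriv_nonneg (fun c => exp c - (1 + c + c^2/2 + c^3/6))
    (fun c => exp c - (1 + c + c^2/2)));
    [| |intros c Hc|exact Hx].
  - intro c; apply is_derive_Reals; auto_derive; [easy|field].
  - rewrite exp_0; lra.
  - pose proof (exp_ge_taylor2 c Hc); lra.
Qed.

Lemma exp_opp_le_taylor2 x : 0 <= x -> exp (- x) <= 1 - x + x^2/2.
Proof.
  intros Hx.
  enough (0 <= 1 - x + x^2/2 - exp (- x)) by lra.
  apply (nonneg_of_deriv_nonneg (fun c => 1 - c + c^2/2 - exp (- c))
    (fun c => -1 + c + exp (- c)));
    [| |intros c _|exact Hx].
  - intro c; apply is_derive_Reals; auto_derive; [easy|field].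
  - rewrite Ropp_0, exp_0; lra.
  - pose proof (exp_ineq1_le (- c)); lra.
Qed.

Lemma exp_opp_ge_taylor3 x : 0 <= x -> 1 - x + x^2/2 - x^3/6 <= exp (- x).
Proof.
  intros Hx.
  enough (0 <= exp (- x) - (1 - x + x^2/2 - x^3/6)) by lra.
  apply (nonneg_of_deriv_nonneg (fun c => exp (- c) - (1 - c + c^2/2 - c^3/6))
    (fun c => 1 - c + c^2/2 - exp (- c)));
    [| |intros c Hc|exact Hx].
  - intro c; apply is_derive_Reals; auto_derive; [easy|field].
  - rewrite Ropp_0, exp_0; lra.
  - pose proof (exp_opp_le_taylor2 c Hc); lra.
Qed.

Lemma exp_sub1_ge a x : 0 <= a <= x -> (1 + a/2 + a^2/6) * x <= exp x - 1.
Proof.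
  intros Hax; pose proof (exp_ge_taylor3 x ltac:(lra)).
  assert (a * x <= x * x) by nra.
  assert (a * a * x <= x * x * x) by nra.
  nra.
Qed.

Lemma ln_pos x : 1 < x -> 0 < ln x.
Proof. intro Hx; rewrite <- ln_1; apply ln_increasing; lra. Qed.

Lemma ln_le_of_le_exp b y : 0 < y -> y <= exp b -> ln y <= b.
Proof. intros Hy Hle; rewrite <- (ln_exp b); apply ln_le; assumption. Qed.

Lemma ln_ge_of_exp_opp a y : 0 < y -> 1 <= y * exp (- a) -> a <= ln y.
Proof.
  intros Hy Hle; rewrite <- (ln_exp a); apply ln_le; [apply exp_pos|].
  assert (Hinv : exp a * exp (- a) = 1) by (rewrite <- exp_plus, Rplus_opp_r; apply exp_0).
  pose proof (exp_pos a); nra.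
Qed.

Lemma ln2_bounds : 0.6 <= ln 2 <= 0.7.
Proof.
  split.
  - apply ln_ge_of_exp_opp; [lra|].
    pose proof (exp_opp_ge_taylor3 0.6 ltac:(lra)); lra.
  - apply ln_le_of_le_exp; [lra|].
    pose proof (exp_ge_taylor3 0.7 ltac:(lra)); lra.
Qed.

(* The cubic bound at 1.08 is too weak, so we square the one at 0.54. *)
Lemma ln3_bounds : 1.08 <= ln 3 <= 1.47.
Proof.
  split.
  - apply ln_ge_of_exp_opp; [lra|].
    replace (Ropp 1.08) with (Ropp 0.54 + Ropp 0.54) by lra; rewrite exp_plus.
    pose proof (exp_opp_ge_taylor3 0.54 ltac:(lra)); nra.
  - apply ln_le_of_le_exp; [lra|].
    pose proof (exp_ge_taylor3 1.47 ltac:(lra)); lra.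
Qed.

Lemma ln4_bounds : 1.2 <= ln 4 <= 1.65.
Proof.
  split.
  - replace 4 with (2 * 2) by lra; rewrite ln_mult by lra.
    pose proof ln2_bounds; lra.
  - apply ln_le_of_le_exp; [lra|].
    pose proof (exp_ge_taylor3 1.65 ltac:(lra)); lra.
Qed.

Lemma ln5_bounds : 1.2 <= ln 5 <= 1.76.
Proof.
  split.
  - pose proof ln4_bounds; pose proof (ln_le 4 5 ltac:(lra) ltac:(lra)); lra.
  - apply ln_le_of_le_exp; [lra|].
    pose proof (exp_ge_taylor3 1.76 ltac:(lra)); lra.
Qed.

Lemma V_H_3_2 : V_H 3 2 = 2 * (sqrt 3 - 1) / ln 3.
Proof.
  unfold V_H; replace (INR 3) with 3 by (simpl; ring); replace (INR 2) with 2 by (simpl; ring).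
  now rewrite Rpower_sqrt by lra.
Qed.

Lemma sqrt3_bounds : 5/3 <= sqrt 3 <= 1.7321.
Proof. pose proof (sqrt_pos 3); pose proof (sqrt_sqrt 3 ltac:(lra)); split; nra. Qed.

Lemma V_J_3_2_le_V_H : V_J 3 2 <= V_H 3 2.
Proof.
  rewrite V_H_3_2; unfold V_J; replace (INR 3) with 3 by (simpl; ring);
    replace (INR 2) with 2 by (simpl; ring).
  pose proof sqrt3_bounds; pose proof ln3_bounds.
  apply Rmult_le_compat_r; [apply Rlt_le, Rinv_0_lt_compat; lra|].
  replace (/ 3) with (1/3) by field; lra.
Qed.

Lemma V_H_3_2_le : V_H 3 2 <= 1.36.
Proof.
  rewrite V_H_3_2; pose proof sqrt3_bounds; pose proof ln3_bounds.
  apply Rle_div_l; lra.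
Qed.

Lemma V_H_ge m k a : 1 < INR m -> 0 < INR k -> 0 <= a -> a * INR k <= ln (INR m) ->
  1 + a/2 + a^2/6 <= V_H m k.
Proof.
  intros Hm Hk Ha Hak; unfold V_H, Rpower.
  pose proof (ln_pos (INR m) Hm).
  set (x := / INR k * ln (INR m)).
  assert (Hkx : INR k * x = ln (INR m)) by (unfold x; field; lra).
  assert (Hax : a <= x) by (apply (Rmult_le_reg_l (INR k)); [lra|]; rewrite Hkx; lra).
  pose proof (exp_sub1_ge a x ltac:(lra)).
  apply Rle_div_r; [lra|]; rewrite <- Hkx; nra.
Qed.

Lemma V_J_ge m k t : 1 < INR m -> t * ln (INR m) <= (1 - / INR m) * INR k -> t <= V_J m k.
Proof.
  intros Hm Ht; unfold V_J.
  pose proof (ln_pos (INR m) ltac:(lra)).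
  apply Rle_div_r; lra.
Qed.

Lemma V_J_ge_large_m m k : 6 <= INR m -> ln (INR m) < 0.6 * INR k -> 1.36 <= V_J m k.
Proof.
  intros Hm Hk; apply V_J_ge; [lra|].
  pose proof (ln_pos (INR m) ltac:(lra)).
  assert (/ INR m <= 1/6) by (unfold Rdiv; rewrite Rmult_1_l; apply Rinv_le_contravar; lra).
  nra.
Qed.

Lemma V_J_ge_small_m m k : (2 <= m <= 5)%nat -> ~ (m = 3 /\ k = 2)%nat ->
  ln (INR m) < 0.6 * INR k -> 1.36 <= V_J m k.
Proof.
  intros Hm Hmk Hk.
  destruct m as [|[|[|[|[|[|m]]]]]]; try lia;
    apply V_J_ge; [simpl; lra| |simpl; lra| |simpl; lra| |simpl; lra|].
  - replace (INR 2) with 2 in * by (simpl; lra).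
    pose proof ln2_bounds.
    assert (Hk2 : (2 <= k)%nat) by (apply INR_lt; simpl; lra).
    apply le_INR in Hk2; simpl in Hk2.
    replace (/ 2) with 0.5 by lra; nra.
  - replace (INR 3) with 3 in * by (simpl; lra).
    pose proof ln3_bounds.
    assert (Hk3 : (3 <= k)%nat) by (enough (1 < k)%nat by lia; apply INR_lt; simpl; lra).
    apply le_INR in Hk3; simpl in Hk3.
    replace (/ 3) with (1/3) by lra; nra.
  - replace (INR 4) with 4 in * by (simpl; lra).
    pose proof ln4_bounds.
    assert (Hk3 : (3 <= k)%nat) by (apply INR_lt; simpl; lra).
    apply le_INR in Hk3; simpl in Hk3.
    replace (/ 4) with 0.25 by lra; nra.
  - replace (INR 5) with 5 in * by (simpl; lra).
    pose proof ln5_bounds.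
    assert (Hk3 : (3 <= k)%nat) by (apply INR_lt; simpl; lra).
    apply le_INR in Hk3; simpl in Hk3.
    replace (/ 5) with 0.2 by lra; nra.
Qed.

Lemma V_max_ge m k : (2 <= m)%nat -> (1 <= k)%nat -> ~ (m = 3 /\ k = 2)%nat ->
  1.36 <= V_max m k.
Proof.
  intros Hm Hk Hmk; unfold V_max.
  pose proof (le_INR _ _ Hm) as Hm2; pose proof (le_INR _ _ Hk) as Hk1; simpl in Hm2, Hk1.
  destruct (Rle_lt_dec (0.6 * INR k) (ln (INR m))) as [Hlarge|Hsmall].
  - eapply Rle_trans, Rmax_r.
    replace 1.36 with (1 + 0.6/2 + 0.6^2/6) by lra.
    apply V_H_ge; lra.
  - eapply Rle_trans, Rmax_l.
    destruct (Nat.le_gt_cases m 5) as [Hm5|Hm6].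
    + apply V_J_ge_small_m; auto.
    + apply le_INR in Hm6; simpl in Hm6.
      apply V_J_ge_large_m; lra.
Qed.

Theorem claim3p2 :
  V_max 3 2 = 2 * (sqrt 3 - 1) / ln 3 /\
  (forall m k : nat, (2 <= m)%nat -> (1 <= k)%nat ->
     2 * (sqrt 3 - 1) / ln 3 <= V_max m k).
Proof.
  rewrite <- V_H_3_2; split.
  - unfold V_max; apply Rmax_right, V_J_3_2_le_V_H.
  - intros m k Hm Hk.
    destruct (Nat.eq_dec m 3) as [->|Hm3]; [destruct (Nat.eq_dec k 2) as [->|Hk2]|].
    + apply Rmax_r.
    + eapply Rle_trans; [apply V_H_3_2_le|apply V_max_ge; lia].
    + eapply Rle_trans; [apply V_H_3_2_le|apply V_max_ge; lia].
Qed.
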